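(* Let $\mathcal A$ be an ordered normed algebra with unit $e$ whose algebra cone $\mathcal A^+$ is normal and closed (in the norm topology). Let $a,b\in\mathcal A$ with at least one of them positive. Then there exists $\delta>0$ such that there is no $x\in\mathcal A$ with $\|x\|<\delta$ and $ab-ba\geq e+x$.
   Context: A normed algebra $\mathcal A$ (real or complex, with submultiplicative norm) with unit $e$. A cone is a nonempty subset $\mathcal A^+\subseteq\mathcal A$ with $\mathcal A^++\mathcal A^+\subseteq\mathcal A^+$, $\lambda\mathcal A^+\subseteq\mathcal A^+$ for all $\lambda\geq 0$, and $\mathcal A^+\cap(-\mathcal A^+)=\{0\}$; it induces the partial order $a\leq b \iff b-a\in\mathcal A^+$. Elements of $\mathcal A^+$ are called positive. The cone is an algebra cone if $\mathcal A^+\cdot\mathcal A^+\subseteq\mathcal A^+$ and $e\in\mathcal A^+$; then $\mathcal A$ is called an ordered normed algebra. The cone is normal if there is a constant $\alpha>0$ such that $0\leq x\leq y$ implies $\|x\|\leq\alpha\|y\|$. *)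

From HB Require Import structures.
From mathcomp Require Import all_boot all_order all_algebra.
From mathcomp Require Import all_classical all_reals all_analysis.
Set Implicit Arguments. Unset Strict Implicit. Unset Printing Implicit Defensive.
Import Order.TTheory GRing.Theory Num.Theory.
Import numFieldNormedType.Exports.
Local Open Scope classical_set_scope.
Local Open Scope ring_scope.

Record normed_algebra (R : realType) (V : normedModType R) := NormedAlgebra {
  alg_mul : V -> V -> V;
  alg_one : V;
  mulA : forall x y z, alg_mul x (alg_mul y z) = alg_mul (alg_mul x y) z;
  mulDl : forall x y z, alg_mul (x + y) z = alg_mul x z + alg_mul y z;
  mulDr : forall x y z, alg_mul x (y + z) = alg_mul x y + alg_mul x z;
  mulZl : forall (l : R) x y, alg_mul (l *: x) y = l *: alg_mul x y;
  mulZr : forall (l : R) x y, alg_mul x (l *: y) = l *: alg_mul x y;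
  mul1l : forall x, alg_mul alg_one x = x;
  mul1r : forall x, alg_mul x alg_one = x;
  one_neq0 : alg_one <> 0;
  normM_le : forall x y, `|alg_mul x y| <= `|x| * `|y|
}.

Section Cones.
Variables (R : realType) (V : normedModType R) (A : normed_algebra V).

Definition is_cone (C : set V) : Prop :=
  [/\ C !=set0,
      (forall x y, C x -> C y -> C (x + y)),
      (forall (l : R) x, 0 <= l -> C x -> C (l *: x)) &
      (forall x, C x -> C (- x) -> x = 0)].

Definition cone_le (C : set V) (a b : V) : Prop := C (b - a).

Definition is_algebra_cone (C : set V) : Prop :=
  [/\ is_cone C, (forall x y, C x -> C y -> C (alg_mul A x y)) & C (alg_one A)].

Definition normal_cone (C : set V) : Prop :=
  exists2 alpha : R, 0 < alpha &
    forall x y : V, cone_le C 0 x -> cone_le C x y -> `|x| <= alpha * `|y|.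
End Cones.

From Pilot Require Import Defs.
From HB Require Import structures.
From mathcomp Require Import all_boot all_order all_algebra.
From mathcomp Require Import all_classical all_reals all_analysis.
Set Implicit Arguments. Unset Strict Implicit. Unset Printing Implicit Defensive.
Import Order.TTheory GRing.Theory Num.Theory.
Import numFieldNormedType.Exports.
Local Open Scope classical_set_scope.
Local Open Scope ring_scope.

(* If [p >= 0] and [pq - qp >= e], induction on [n] gives
   [p^(n+1) q - q p^(n+1) >= (n+1) p^n >= 0], so normality of the cone yields
   [(n+1) |p^n| <= 2 alpha |p| |q| |p^n|], hence [p^n = 0] for large [n]; the
   same inequality read backwards propagates [p^(n+1) = 0] down to [p^0 = e = 0].
   For [b >= 0] apply this to [b] and [-a]. Closedness of the cone then keeps
   [ab - ba - e] at positive distance from it. *)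

Section NormedAlgebraTheory.
Variables (R : realType) (V : normedModType R) (A : normed_algebra V).
Local Notation M := (alg_mul A).
Local Notation e := (alg_one A).

Lemma alg_mul0l x : M 0 x = 0.
Proof. by apply: (addrI (M 0 x)); rewrite -Defs.mulDl !addr0. Qed.

Lemma alg_mul0r x : M x 0 = 0.
Proof. by apply: (addrI (M x 0)); rewrite -Defs.mulDr !addr0. Qed.

Lemma alg_mulNl x y : M (- x) y = - M x y.
Proof. by apply/eqP; rewrite -subr_eq0 opprK -Defs.mulDl addNr alg_mul0l. Qed.

Lemma alg_mulNr x y : M x (- y) = - M x y.
Proof. by apply/eqP; rewrite -subr_eq0 opprK -Defs.mulDr addNr alg_mul0r. Qed.

Lemma alg_mulBl x y z : M (x - y) z = M x z - M y z.
Proof. by rewrite Defs.mulDl alg_mulNl. Qed.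

Lemma alg_mulBr x y z : M x (y - z) = M x y - M x z.
Proof. by rewrite Defs.mulDr alg_mulNr. Qed.

Definition alg_pow (p : V) (n : nat) : V := iter n (M p) e.

Definition alg_comm (x y : V) : V := M x y - M y x.

Lemma alg_commNr x y : alg_comm x (- y) = alg_comm y x.
Proof. by rewrite /alg_comm alg_mulNr alg_mulNl opprK addrC. Qed.

Lemma alg_comm_powS p q n :
  alg_comm (alg_pow p n.+1) q =
  M p (alg_comm (alg_pow p n) q) + M (alg_comm p q) (alg_pow p n).
Proof.
rewrite /alg_comm /= alg_mulBr alg_mulBl -!Defs.mulA [M q (M p _)]Defs.mulA.
by rewrite [M p (M q _)]Defs.mulA addrA subrK.
Qed.

Lemma norm_alg_comm_le x y : `|alg_comm x y| <= 2 * `|x| * `|y|.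
Proof.
apply: le_trans (ler_normB _ _) _.
rewrite -mulrA mulr2n mulrDl !mul1r lerD ?Defs.normM_le //.
by rewrite mulrC Defs.normM_le.
Qed.

Section AlgebraCone.
Variables (C : set V) (hC : is_algebra_cone A C).

Lemma alg_pow_cone p n : C p -> C (alg_pow p n).
Proof. by case: hC => _ CM Ce Cp; elim: n => //= n; apply: CM. Qed.

Lemma alg_comm_pow_ge p q : C p -> cone_le C e (alg_comm p q) ->
  forall n, cone_le C (n.+1%:R *: alg_pow p n) (alg_comm (alg_pow p n.+1) q).
Proof.
case: hC => -[_ CD _ _] CM _ Cp Cpq; rewrite /cone_le.
elim=> [|n IH]; first by rewrite scale1r /= Defs.mul1r.
suff -> : alg_comm (alg_pow p n.+2) q - n.+2%:R *: alg_pow p n.+1 =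
    M p (alg_comm (alg_pow p n.+1) q - n.+1%:R *: alg_pow p n) +
    M (alg_comm p q - e) (alg_pow p n.+1).
  by apply: CD; apply: CM => //; apply: alg_pow_cone.
rewrite alg_comm_powS; move: (alg_comm _ q) (alg_comm p q) => X Y.
rewrite alg_mulBr alg_mulBl Defs.mulZr Defs.mul1l.
by rewrite -[n.+2]addn1 natrD scalerDl scale1r opprD addrACA.
Qed.

Lemma normal_cone_alg_pow_le p q (alpha : R) : C p -> 0 < alpha ->
    (forall x y, cone_le C 0 x -> cone_le C x y -> `|x| <= alpha * `|y|) ->
    cone_le C e (alg_comm p q) ->
  forall n, n.+1%:R * `|alg_pow p n| <= alpha * (2 * `|alg_pow p n.+1| * `|q|).
Proof.
case: hC => -[_ _ CZ _] _ _ Cp alpha_gt0 normalC Cpq n.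
have := normalC (n.+1%:R *: alg_pow p n) (alg_comm (alg_pow p n.+1) q).
rewrite normrZ ger0_norm // => /(_ _ (alg_comm_pow_ge Cp Cpq n)) le_alpha.
apply: le_trans (le_alpha _) _.
  by rewrite /cone_le subr0; apply: CZ => //; apply: alg_pow_cone.
by rewrite ler_wpM2l ?(ltW alpha_gt0) ?norm_alg_comm_le.
Qed.

Lemma cone_comm_not_ge_unit p q :
  normal_cone C -> C p -> ~ cone_le C e (alg_comm p q).
Proof.
move=> [alpha alpha_gt0 normalC] Cp Cpq.
have pow_le := normal_cone_alg_pow_le Cp alpha_gt0 normalC Cpq.
set K := alpha * (2 * `|p| * `|q|).
have pow_large_eq0 n : K < n.+1%:R -> alg_pow p n = 0.
  move=> ltKn; apply/eqP; rewrite -normr_le0.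
  have : n.+1%:R * `|alg_pow p n| <= K * `|alg_pow p n|.
    apply: le_trans (pow_le n) _.
    rewrite /K -!mulrA ler_wpM2l ?(ltW alpha_gt0) // ler_wpM2l //.
    by rewrite mulrCA mulrC ler_wpM2l ?Defs.normM_le.
  by rewrite -subr_le0 -mulrBl pmulr_rle0 // subr_gt0.
have pow_eq0_down m k : alg_pow p (m + k) = 0 -> alg_pow p m = 0.
  elim: k => [|k IH]; first by rewrite addn0.
  rewrite addnS => powS_eq0; apply: IH; apply/eqP; rewrite -normr_le0.
  have := pow_le (m + k)%N; rewrite powS_eq0 normr0 mulr0 mul0r mulr0.
  by rewrite pmulr_rle0 ?ltr0Sn.
apply: (Defs.one_neq0 (n := A)); apply: (pow_eq0_down 0%N (Num.Def.truncn K)).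
by apply: pow_large_eq0; apply: truncnS_gt.
Qed.

End AlgebraCone.
End NormedAlgebraTheory.

Lemma closed_notin_near (R : realType) (V : normedModType R) (C : set V) y :
  closed C -> ~ C y -> exists2 d : R, 0 < d & forall x, `|x| < d -> ~ C (y - x).
Proof.
move=> clC Cy; have : nbhs y (~` C).
  by apply: open_nbhs_nbhs; split => //; apply: closed_openC.
move=> /nbhs_ballP [d d_gt0 ballC]; exists d => // x ltxd; apply: ballC.
by rewrite -ball_normE /ball_ /= opprB addrC subrK.
Qed.

Theorem corollary2p3 (R : realType) (V : normedModType R) (A : normed_algebra V)
  (C : set V) (hC : is_algebra_cone A C) (hN : normal_cone C) (hcl : closed C)
  (a b : V) (hab : C a \/ C b) :
  exists2 delta : R, 0 < delta &
    ~ (exists x : V, `|x| < delta /\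
         cone_le C (alg_one A + x) (alg_mul A a b - alg_mul A b a)).
Proof.
have not_ge_unit : ~ cone_le C (alg_one A) (alg_comm A a b).
  case: hab => [Ca|Cb]; first exact: cone_comm_not_ge_unit.
  by rewrite -alg_commNr; apply: cone_comm_not_ge_unit.
have [delta delta_gt0 farC] := closed_notin_near hcl not_ge_unit.
exists delta => // -[x [ltxd Cx]]; apply: (farC x ltxd).
by rewrite /cone_le opprD addrA in Cx.
Qed.
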